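(* Let $A$ be a finite nonempty subset of $(0,\infty)$ and let $f:A\to[0,\infty)$. Let $f\circ f$ denote the function defined on $A_2=\{a\in A: f(a)\in A\}$ by $a\mapsto f(f(a))$, and let $h_f=\{(f(a)/a,\,a):a\in A\}$. Then $h_f=f\circ f$ (i.e. $\{(f(a)/a,a):a\in A\}=\{(a,f(f(a))):a\in A_2\}$) if and only if $A=\{1\}$ and $f(1)=1$, i.e. $f=\{(1,1)\}$.
   Context: For a function $f$ on a finite set $A\subset(0,\infty)$, the Hirsch function $h_f$ is defined exactly at the points $f(a)/a$, $a\in A$, and maps $f(a)/a$ to $a$. Equality of functions means same domain and same values. *)

From HB Require Import structures.
From mathcomp Require Import all_boot all_order all_algebra.
From mathcomp Require Import all_classical all_reals.
Set Implicit Arguments. Unset Strict Implicit. Unset Printing Implicit Defensive.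
Import Order.TTheory GRing.Theory Num.Theory.
Local Open Scope ring_scope.
Local Open Scope classical_set_scope.

Definition hirsch_graph {R : realType} (A : set R) (f : R -> R) : set (R * R) :=
  [set (f a / a, a) | a in A].

Definition comp_graph {R : realType} (A : set R) (f : R -> R) : set (R * R) :=
  [set (a, f (f a)) | a in [set a | A a /\ A (f a)]].

From HB Require Import structures.
From mathcomp Require Import all_boot all_order all_algebra finmap.
From mathcomp Require Import all_classical all_reals exp lra.
Import Order.TTheory GRing.Theory Num.Theory.

Set Implicit Arguments.
Unset Strict Implicit.
Unset Printing Implicit Defensive.

Local Open Scope ring_scope.
Local Open Scope classical_set_scope.

(* Comparing the graphs shows that g a := f a / a maps A into A with
   f (f (g a)) = a; by finiteness g and then f are permutations of A, and
   g = (f o f)^-1.  Writing f c = c * g c at c = f (f b), the function x = ln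
   satisfies x (f^3 b) = x (f^2 b) + x b along the permutation f.  The
   correlations C_k = \sum_b x b * x (f^k b) depend only on |k|, and multiplying
   the recurrence by x (f^i b), i = 0..3, and summing gives C_3 = C_2 + C_0,
   C_2 = 2 C_1, C_1 = C_0 + C_2 and C_0 = C_1 + C_3, whence
   C_0 = \sum_b (ln b)^2 = 0 and A = {1}. *)

Lemma finite_set_inj_surj (T : choiceType) (A : set T) (g : T -> T) :
  finite_set A -> set_fun A A g -> set_inj A g -> set_surj A A g.
Proof.
move=> Afin gA ginj.
suff gAA : g @` A = A by rewrite /set_surj gAA.
have gAfin : finite_set (g @` A) by exact: finite_image.
apply: fset_set_inj => //; apply/eqP; rewrite eqEfcard; apply/andP; split.
  by rewrite -fset_set_sub // image_subP.
rewrite fset_set_image // card_in_imfset //.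
by move=> a b; rewrite !in_fset_set //; exact: ginj.
Qed.

Section CubicRecurrenceAlongPermutation.
Variables (R : realFieldType) (T : choiceType) (A : set T) (s : T -> T).
Hypotheses (Afin : finite_set A) (sbij : set_bij A A s).

Lemma fsum_iter (F : T -> R) k :
  \sum_(b \in A) F (iter k s b) = \sum_(b \in A) F b.
Proof.
elim: k => [//|k IHk].
rewrite -[RHS]IHk [RHS](reindex_fsbig s A A) //.
by apply: eq_fsbigr => b _; rewrite iterSr.
Qed.

Variable x : T -> R.

Definition autocorr k := \sum_(b \in A) x b * x (iter k s b).

Lemma autocorr_iter i k :
  \sum_(b \in A) x (iter i s b) * x (iter (k + i) s b) = autocorr k.
Proof.
rewrite /autocorr -[RHS](fsum_iter _ i).
by apply: eq_fsbigr => b _; rewrite iterD.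
Qed.

Lemma autocorr_iterC i k :
  \sum_(b \in A) x (iter (k + i) s b) * x (iter i s b) = autocorr k.
Proof. by rewrite -(autocorr_iter i); apply: eq_fsbigr => b _; rewrite mulrC. Qed.

Hypothesis xrec : forall b, A b -> x (s (s (s b))) = x (s (s b)) + x b.

Lemma fsum_mul_recurrence (w : T -> R) :
  \sum_(b \in A) w b * x (iter 3 s b) =
  \sum_(b \in A) w b * x (iter 2 s b) + \sum_(b \in A) w b * x b.
Proof.
rewrite -fsbig_split //; apply: eq_fsbigr => b /set_mem Ab.
by rewrite xrec // mulrDr.
Qed.

Lemma cubic_recurrence_eq0 b : A b -> x b = 0.
Proof.
have e0 := fsum_mul_recurrence x.
have e1 := fsum_mul_recurrence (fun b => x (iter 1 s b)).
have e2 := fsum_mul_recurrence (fun b => x (iter 2 s b)).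
have e3 := fsum_mul_recurrence (fun b => x (iter 3 s b)).
rewrite (autocorr_iter 0 3) (autocorr_iter 0 2) (autocorr_iter 0 0) in e0.
rewrite (autocorr_iter 1 2) (autocorr_iter 1 1) (autocorr_iterC 0 1) in e1.
rewrite (autocorr_iter 2 1) (autocorr_iter 2 0) (autocorr_iterC 0 2) in e2.
rewrite (autocorr_iter 3 0) (autocorr_iterC 2 1) (autocorr_iterC 0 3) in e3.
have autocorr0 : autocorr 0 = 0 by lra.
move=> Ab; have /eqP : x b * x b = 0.
  by apply: (pfsumr_eq0 Afin _ autocorr0) => // c _; rewrite -expr2 sqr_ge0.
by rewrite mulf_eq0 orbb => /eqP.
Qed.

End CubicRecurrenceAlongPermutation.

Section HirschSubComp.
Variables (R : realType) (A : set R) (f : R -> R).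
Hypotheses (Afin : finite_set A) (Apos : forall a, A a -> 0 < a).
Hypothesis hirsch_sub : hirsch_graph A f `<=` comp_graph A f.

Lemma hirsch_sub_compE a :
  A a -> [/\ A (f a / a), A (f (f a / a)) & f (f (f a / a)) = a].
Proof.
move=> Aa; have [b [Ab Afb] [<- <-]] // : comp_graph A f (f a / a, a).
by apply: hirsch_sub; exists a.
Qed.

Lemma hirsch_sub_comp_bij : set_bij A A f.
Proof.
have gA : set_fun A A (fun a => f a / a) by move=> a /hirsch_sub_compE[].
have gK a : A a -> f (f (f a / a)) = a by move=> /hirsch_sub_compE[].
have ginj : set_inj A (fun a => f a / a).
  by move=> a a' /set_mem/gK + /set_mem/gK + /= e; rewrite e => -> ->.
have gsurj := finite_set_inj_surj Afin gA ginj.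
have fA : set_fun A A f.
  by move=> _ /gsurj[a Aa <-]; have [] := hirsch_sub_compE Aa.
have finj : set_inj A f.
  move=> _ _ /set_mem/gsurj[a Aa <-] /set_mem/gsurj[a' Aa' <-] e.
  by rewrite -(gK a Aa) -(gK a' Aa') e.
by split=> //; exact: finite_set_inj_surj.
Qed.

Lemma hirsch_sub_comp_ln_recurrence b :
  A b -> ln (f (f (f b))) = ln (f (f b)) + ln b.
Proof.
have [fA finj _] := hirsch_sub_comp_bij.
move=> Ab; set c := f (f b); have Ac : A c by apply/fA/fA.
have [Agc _ ffgc] := hirsch_sub_compE Ac.
have gcb : f c / c = b by apply/finj/finj; rewrite ?inE //; apply: fA.
have cpos := Apos Ac; rewrite -{1}gcb.
by rewrite -lnM ?posrE ?(Apos Agc) // mulrC divfK // gt_eqF.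
Qed.

Lemma hirsch_sub_comp_eq1 b : A b -> b = 1.
Proof.
move=> Ab; apply/eqP; rewrite -ln_eq0 ?Apos //; apply/eqP.
exact: (cubic_recurrence_eq0 Afin hirsch_sub_comp_bij
          hirsch_sub_comp_ln_recurrence).
Qed.

End HirschSubComp.

Theorem theorem10 (R : realType) (A : set R) (f : R -> R)
  (hAfin : finite_set A) (hAne : A !=set0)
  (hApos : forall a, A a -> 0 < a)
  (hfnn : forall a, A a -> 0 <= f a) :
  hirsch_graph A f = comp_graph A f <-> (A = [set 1] /\ f 1 = 1).
Proof.
split=> [hirschE | [-> f1]].
  have hsub : hirsch_graph A f `<=` comp_graph A f by rewrite hirschE.
  have eq1 := hirsch_sub_comp_eq1 hAfin hApos hsub.
  have A1 : A = [set 1].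
    apply/seteqP; split=> [a /eq1 //|_ ->].
    by case: hAne => a Aa; rewrite -(eq1 a Aa).
  have [fA _ _] := hirsch_sub_comp_bij hAfin hsub.
  by split=> //; apply/eq1/fA; rewrite A1.
apply/seteqP; split=> [_ [_ -> <-]|_ [_ [-> _] <-]].
  by exists 1; rewrite /= ?f1 ?divr1 ?f1.
by exists 1; rewrite //= f1 divr1 f1.
Qed.
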